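(* Let $n\ge3$ and $(R,\Lambda)$ a form ring. Then the elementary unitary group $EU_{2n}(R,\Lambda)$ is normally generated by the subgroup $H(A_{n+1})$, where $A_{n+1}<E_n(R)$ is the subgroup of Lemma 5.2 and $H:\mathrm{GL}_n(R)\to U_{2n}(R,\Lambda)$, $H(X)=\mathrm{diag}(X,(X^{-1})^* )$, is the hyperbolic homomorphism.
   Context: Form ring $(R,\Lambda)$: $R$ has an anti-automorphism $x\mapsto x^*$ with $x^{**}=\varepsilon x\varepsilon^*$ for a unit $\varepsilon$, $\varepsilon^*=\varepsilon^{-1}$, and $\Lambda$ is an additive subgroup with $r^*\Lambda r\subset\Lambda$ and $\{x-x^*\varepsilon\mid x\in R\}\subset\Lambda\subset\{x\mid x=-x^*\varepsilon\}$; $(x_{ij})^*=(x_{ji}^* )$. $U_{2n}(R,\Lambda)=\{\begin{pmatrix}\alpha&\beta\\ \gamma&\delta\end{pmatrix}\in\mathrm{GL}_{2n}(R)\mid\alpha^*\delta+\gamma^*\varepsilon\beta=I_n,\ \alpha^*\gamma,\beta^*\delta\in\Lambda_n\}$ with $\Lambda_n=\{(a_{ij})\mid a_{ij}=-a_{ji}^*\varepsilon\ (i\ne j),\ a_{ii}\in\Lambda\}$; $EU_{2n}(R,\Lambda)$ is its elementary subgroup (Hahn–O'Meara), containing $H(E_n(R))$. $E_n(R)$ is generated by elementary matrices $e_{ij}(r)$. The subgroup $A_{n+1}<E_n(R)$ is the image of the even permutations in the group $S_{n+1}<\mathrm{SAut}(F_n)$ generated by $\sigma_{ij}$ (swap $a_i,a_j$)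 and $\sigma_{i,n+1}$ ($a_i\mapsto a_i^{-1}$, $a_j\mapsto a_ja_i^{-1}$) under $\mathrm{SAut}(F_n)\to\mathrm{SL}_n(\mathbb{Z})\to E_n(R)$. *)

From HB Require Import structures.
From mathcomp Require Import all_boot all_order all_algebra.
Set Implicit Arguments. Unset Strict Implicit. Unset Printing Implicit Defensive.
Import GRing.Theory.
Local Open Scope ring_scope.

Record is_form_ring (R : pzRingType) (star : R -> R) (eps epsi : R)
    (Lam : R -> Prop) : Prop := {
  fr_starD : forall x y, star (x + y) = star x + star y;
  fr_starM : forall x y, star (x * y) = star y * star x;
  fr_star1 : star 1 = 1;
  fr_star_bij : bijective star;
  fr_epsK : eps * epsi = 1 /\ epsi * eps = 1;
  fr_star_eps : star eps = epsi;
  fr_starK : forall x, star (star x) = eps * x * star eps;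
  fr_Lam0 : Lam 0;
  fr_LamB : forall x y, Lam x -> Lam y -> Lam (x - y);
  fr_Lam_conj : forall r x, Lam x -> Lam (star r * x * r);
  fr_Lam_min : forall x, Lam (x - star x * eps);
  fr_Lam_max : forall x, Lam x -> x = - (star x * eps) }.

Definition star_mx (R : pzRingType) (star : R -> R) m n (X : 'M[R]_(m, n))
  : 'M[R]_(n, m) := \matrix_(i, j) star (X j i).

Definition in_Lam_n (R : pzRingType) (star : R -> R) (eps : R)
    (Lam : R -> Prop) n (A : 'M[R]_n) : Prop :=
  (forall i j, i != j -> A i j = - (star (A j i) * eps)) /\
  (forall i, Lam (A i i)).

(* two-sided invertibility (R need not be commutative) *)
Definition mx_invertible (R : pzRingType) n (M : 'M[R]_n) : Prop :=
  exists N : 'M[R]_n, M *m N = 1%:M /\ N *m M = 1%:M.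

Definition in_U (R : pzRingType) (star : R -> R) (eps : R) (Lam : R -> Prop)
    n (M : 'M[R]_(n + n)) : Prop :=
  let a := ulsubmx M in let b := ursubmx M in
  let c := dlsubmx M in let d := drsubmx M in
  [/\ mx_invertible M,
      star_mx star a *m d + star_mx star c *m (eps *: b) = 1%:M,
      in_Lam_n star eps Lam (star_mx star a *m c) &
      in_Lam_n star eps Lam (star_mx star b *m d)].

Inductive mx_gen (R : pzRingType) m (S : 'M[R]_m -> Prop) : 'M[R]_m -> Prop :=
  | mx_gen1 : mx_gen S 1%:M
  | mx_genS M : S M -> mx_gen S M
  | mx_genM M N : mx_gen S M -> mx_gen S N -> mx_gen S (M *m N)
  | mx_genV M N : mx_gen S M -> M *m N = 1%:M -> N *m M = 1%:M -> mx_gen S N.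

Definition elem_mx (R : pzRingType) n (i j : 'I_n) (r : R) : 'M[R]_n :=
  1%:M + r *: delta_mx i j.

Definition in_E (R : pzRingType) n : 'M[R]_n -> Prop :=
  mx_gen (fun X => exists i j r, i != j /\ X = elem_mx i j r).

(* Hyperbolic map H(X) = diag(X, (X^{-1})^* ), with Y the inverse of X *)
Definition hyp_mx (R : pzRingType) (star : R -> R) n (X Y : 'M[R]_n)
  : 'M[R]_(n + n) := block_mx X 0 0 (star_mx star Y).

Definition in_H_of (R : pzRingType) (star : R -> R) n
    (P : 'M[R]_n -> Prop) (M : 'M[R]_(n + n)) : Prop :=
  exists X Y, [/\ P X, X *m Y = 1%:M, Y *m X = 1%:M & M = hyp_mx star X Y].

(* EU_{2n}(R,Lambda) (Hahn--O'Meara): generated by H(E_n(R)) and the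
   unitary matrices [[I, b],[0, I]] and [[I, 0],[c, I]]. *)
Definition in_EU (R : pzRingType) (star : R -> R) (eps : R) (Lam : R -> Prop)
    n : 'M[R]_(n + n) -> Prop :=
  mx_gen (fun M =>
    in_H_of star (@in_E R n) M \/
    (in_U star eps Lam M /\
     ((exists b, M = block_mx 1%:M b 0 1%:M) \/
      (exists c, M = block_mx 1%:M 0 c 1%:M)))).

(* Image in E_n(R) of sigma_{i,n+1}: a_i -> a_i^{-1}, a_j -> a_j a_i^{-1};
   column c is the abelianized image of a_c. *)
Definition sigma_last_mx (R : pzRingType) n (i : 'I_n) : 'M[R]_n :=
  \matrix_(r, c) (((r == c) && (c != i))%:R - (r == i)%:R).

(* images of the transposition generators sigma_ij of S_{n+1} *)
Definition sigma_gen (R : pzRingType) n (X : 'M[R]_n) : Prop :=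
  (exists i j : 'I_n, i != j /\ X = @tperm_mx R n i j) \/
  (exists i : 'I_n, X = @sigma_last_mx R n i).

(* A_{n+1}: image of the even permutations = products of an even number
   of transpositions sigma_ij *)
Definition in_A (R : pzRingType) n (X : 'M[R]_n) : Prop :=
  exists s : seq 'M[R]_n,
    [/\ (forall Y, Y \in s -> sigma_gen Y), ~~ odd (size s) &
        X = foldr (fun A B => A *m B) 1%:M s].

Definition normal_closure_in (R : pzRingType) m (G S : 'M[R]_m -> Prop)
  : 'M[R]_m -> Prop :=
  mx_gen (fun M => exists g g' h,
    [/\ G g, g *m g' = 1%:M, g' *m g = 1%:M, S h & M = g *m h *m g']).

From HB Require Import structures.
From mathcomp Require Import all_boot all_order all_algebra.
From mathcomp Require Import perm.
Set Implicit Arguments. Unset Strict Implicit. Unset Printing Implicit Defensive.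
Import GRing.Theory.
Local Open Scope ring_scope.

(** H(A_{n+1}) lies in EU because A_{n+1} lies in E_n(R): every generator
    of A_{n+1} is a product of elementary matrices times a sign matrix
    diag(1,..,-1,..,1), and the product of two sign matrices is the square
    of a Weyl element.

    Conversely, let N be the normal closure of H(A_{n+1}).  For distinct
    p, q pick a third index i (this is where n >= 3 enters).  The
    permutation matrix P of the 3-cycle (q p)(i q) lies in A_{n+1}, so N
    contains [H(e_iq(r)), H(P)] = H(e_iq(r) e_pi(-r)), whose commutator
    with H(e_iq(1)) is H(e_pq(r)); hence H(E_n(R)) lies in N.  A unipotent
    generator [[1,b],[0,1]] factors into generators with b supported on
    {(p,q),(q,p)} or on a single (p,p), and each of these is, up to a factor
    of the first kind, the commutator of some H(e_pj(r)) with a unipotent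
    generator supported at a third index j.  The lower unipotent generators
    are symmetric. *)

Definition rdelta_mx (R : pzRingType) n (a : R) (p q : 'I_n) : 'M[R]_n :=
  \matrix_(x, y) if (x == p) && (y == q) then a else 0.

Lemma neq_eq_symF (T : eqType) (a b : T) : a != b -> (b == a) = false.
Proof. by rewrite eq_sym => /negbTE. Qed.

Ltac simpl_neq := repeat first
 [ progress rewrite ?eqxx /=
 | match goal with
   | H : is_true (?a != ?a) |- _ => by rewrite eqxx in H
   | H : is_true (~~ _) |- _ => progress rewrite ?(negbTE H) /=
   | H : is_true (~~ _) |- _ => progress rewrite ?(neq_eq_symF H) /=
   end ].

Ltac case_indices := repeat (simpl_neq; match goal with
  |- context [?x == ?p] => case: (eqVneq x p) => [?|?]; [subst x|] end);
  simpl_neq.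

Ltac simpl_ring := rewrite ?(subrr, addr0, add0r, subr0, sub0r, mulr0, mul0r,
  mulr1, mul1r, mulr1n, mulr0n, oppr0, opprK, andbF, andbT, mulrN, mulNr).

Ltac close_sum := try done; try (by rewrite addrC);
  try (by rewrite ?addrA ?(addNr, subrr, add0r, addr0, addrK, addrNK, subrK,
                           addKr, addNKr));
  try (by rewrite ?addrA ?(addNr, subrr, add0r, addr0, addrK, addrNK, subrK,
                           addKr, addNKr) addrC).

(* Proves an identity between sums of [rdelta_mx] entrywise, splitting on all
   index coincidences. *)
Ltac rdelta_entrywise :=
  apply/matrixP => x y; rewrite /rdelta_mx ?mxE; case_indices; simpl_ring;
  close_sum.

Section MatrixUnits.
Variables (R : pzRingType) (n : nat).
Implicit Types (a b : R) (p q s t : 'I_n) (A : 'M[R]_n).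

Lemma mul_rdelta_mx a b p q s t :
  rdelta_mx a p q *m rdelta_mx b s t =
  if q == s then rdelta_mx (a * b) p t else 0.
Proof.
apply/matrixP => x y; rewrite !mxE (bigD1 q) //= big1 ?addr0; last first.
  by move=> k /negbTE kq; rewrite mxE kq andbF mul0r.
rewrite !mxE eqxx andbT; case: (eqVneq q s) => [?|nqs]; [subst s|]; rewrite ?mxE ?eqxx.
  by case: (x == p); case: (y == t); rewrite /= ?mulr0 ?mul0r.
by rewrite /= mulr0.
Qed.

Lemma mul_rdelta_mx_neq a b p q s t :
  q != s -> rdelta_mx a p q *m rdelta_mx b s t = 0.
Proof. by move=> h; rewrite mul_rdelta_mx (negbTE h). Qed.

Lemma rdelta_mx0 p q : rdelta_mx (0 : R) p q = 0.
Proof. by apply/matrixP => x y; rewrite !mxE; case: ifP. Qed.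

Lemma rdelta_mxD a b p q :
  rdelta_mx (a + b) p q = rdelta_mx a p q + rdelta_mx b p q.
Proof. by apply/matrixP => x y; rewrite !mxE; case: ifP; rewrite ?addr0. Qed.

Lemma rdelta_mxN a p q : rdelta_mx (- a) p q = - rdelta_mx a p q.
Proof. by apply/matrixP => x y; rewrite !mxE; case: ifP; rewrite ?oppr0. Qed.

Lemma mulmx_rdelta_entry A a p q x y :
  (A *m rdelta_mx a p q) x y = if y == q then A x p * a else 0.
Proof.
rewrite !mxE (bigD1 p) //= big1 ?addr0; last first.
  by move=> k /negbTE kq; rewrite mxE kq /= mulr0.
by rewrite mxE eqxx /=; case: (y == q); rewrite ?mulr0.
Qed.

Lemma matrix_sum_rdelta A : A = \sum_p \sum_q rdelta_mx (A p q) p q.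
Proof.
apply/matrixP => x y; rewrite summxE.
under eq_bigr do rewrite summxE.
rewrite (bigD1 x) //= [X in _ + X]big1 => [|p hp].
  rewrite (bigD1 y) //= big1 => [|q hq].
    by rewrite !mxE !eqxx /= !addr0.
  by rewrite mxE eqxx eq_sym (negbTE hq).
by rewrite big1 // => q _; rewrite mxE eq_sym (negbTE hp).
Qed.

Definition pair_part A p q : 'M[R]_n :=
  if (p < q)%N then rdelta_mx (A p q) p q + rdelta_mx (A q p) q p
  else if p == q then rdelta_mx (A p p) p p else 0.

Lemma matrix_sum_pair_part A : A = \sum_p \sum_q pair_part A p q.
Proof.
pose upper p q := if (p < q)%N then rdelta_mx (A p q) p q else 0.
pose diag p q := if p == q then rdelta_mx (A p q) p q else 0.
pose lower p q := if (q < p)%N then rdelta_mx (A p q) p q else 0.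
pose lower' p q := if (p < q)%N then rdelta_mx (A q p) q p else 0.
have split_rdelta : \sum_p \sum_q rdelta_mx (A p q) p q =
   \sum_p \sum_q upper p q + \sum_p \sum_q diag p q + \sum_p \sum_q lower p q.
  rewrite -!big_split /=; apply: eq_bigr => p _; rewrite -!big_split /=.
  apply: eq_bigr => q _; rewrite /upper /diag /lower -val_eqE.
  by case: (ltngtP p q) => h; rewrite ?addr0 ?add0r.
have split_pair : \sum_p \sum_q pair_part A p q =
   \sum_p \sum_q upper p q + \sum_p \sum_q diag p q + \sum_p \sum_q lower' p q.
  rewrite -!big_split /=; apply: eq_bigr => p _; rewrite -!big_split /=.
  apply: eq_bigr => q _; rewrite /upper /diag /lower' /pair_part -val_eqE.
  case: (ltngtP p q) => h; rewrite ?addr0 ?add0r //.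
  by rewrite (ord_inj h).
have lower_swap : \sum_p \sum_q lower p q = \sum_p \sum_q lower' p q.
  by rewrite exchange_big.
by rewrite {1}[A]matrix_sum_rdelta split_rdelta split_pair lower_swap.
Qed.

Lemma elem_mxE p q a : elem_mx p q a = 1%:M + rdelta_mx a p q.
Proof.
apply/matrixP => x y; rewrite /elem_mx !mxE.
by case: (_ && _); rewrite ?mulr1 ?mulr0.
Qed.

Lemma elem_mxD p q a b :
  p != q -> elem_mx p q a *m elem_mx p q b = elem_mx p q (a + b).
Proof.
move=> h; rewrite !elem_mxE mulmxDl !mulmxDr !mul1mx mulmx1.
by rewrite mul_rdelta_mx_neq 1?eq_sym // addr0 rdelta_mxD addrA; rdelta_entrywise.
Qed.

Lemma elem_mx0 p q : elem_mx p q (0 : R) = 1%:M.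
Proof. by rewrite elem_mxE rdelta_mx0 addr0. Qed.

End MatrixUnits.

Ltac expand_elem := rewrite ?elem_mxE; repeat (progress rewrite ?(mulmxDl,
  mulmxDr, mul1mx, mulmx1, mul_rdelta_mx, mul0mx, mulmx0, mulNmx, mulmxN,
  addr0, add0r); simpl_neq).

Definition mx_inv_pair (R : pzRingType) m (A B : 'M[R]_m) :=
  A *m B = 1%:M /\ B *m A = 1%:M.

Section InversePairs.
Variables (R : pzRingType) (m : nat).
Implicit Types (A B C D : 'M[R]_m).

Lemma mx_inv_pair_sym A B : mx_inv_pair A B -> mx_inv_pair B A.
Proof. by case. Qed.

Lemma mx_inv_pairM A B C D :
  mx_inv_pair A B -> mx_inv_pair C D -> mx_inv_pair (A *m C) (D *m B).
Proof.
move=> [h1 h2] [h3 h4]; split.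
  by rewrite !mulmxA -(mulmxA A C D) h3 mulmx1 h1.
by rewrite !mulmxA -(mulmxA D B A) h2 mulmx1 h4.
Qed.

Lemma mx_inv_pair_uniq A B C : mx_inv_pair A B -> mx_inv_pair A C -> B = C.
Proof. by move=> [_ h2] [h3 _]; rewrite -[B]mulmx1 -h3 mulmxA h2 mul1mx. Qed.

Lemma mx_gen_inv (S : 'M[R]_m -> Prop) A B :
  mx_gen S A -> mx_inv_pair A B -> mx_gen S B.
Proof. by move=> h [h1 h2]; apply: (mx_genV h). Qed.

End InversePairs.

Section ElementaryRelations.
Variables (R : pzRingType) (n : nat).
Implicit Types (a b : 'I_n) (c : R).

Lemma mx_inv_pair_elem (p q : 'I_n) c :
  p != q -> mx_inv_pair (elem_mx p q c) (elem_mx p q (- c)).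
Proof. by move=> h; rewrite /mx_inv_pair !elem_mxD // subrr addNr elem_mx0. Qed.

Lemma commutator_elem_mx (i j k : 'I_n) c : i != j -> j != k -> i != k ->
  elem_mx i j 1 *m (elem_mx i j c *m elem_mx k i (- c)) *m elem_mx i j (-1)
    *m (elem_mx k i c *m elem_mx i j (- c)) = elem_mx k j c.
Proof. by move=> hij hjk hik; expand_elem; rdelta_entrywise. Qed.

Lemma tperm_ifE a b x : tperm a b x = if x == a then b else if x == b then a else x.
Proof.
case: tpermP => [->|->|/eqP h1 /eqP h2]; rewrite ?eqxx //.
  by case: eqP => // ->.
by rewrite (negbTE h1) (negbTE h2).
Qed.

Lemma tperm_mx_entry a b x y : (tperm_mx a b : 'M[R]_n) x y = (tperm a b x == y)%:R.
Proof. by rewrite /tperm_mx /perm_mx /row_perm !mxE. Qed.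

Lemma tperm_eq_swap a b x y : (tperm a b x == y) = (x == tperm a b y).
Proof. by rewrite -{1}(tpermK a b y) (inj_eq perm_inj). Qed.

Lemma tperm_mx_mul_rdelta a b c p q :
  tperm_mx a b *m rdelta_mx c p q = rdelta_mx c (tperm a b p) q.
Proof.
rewrite /tperm_mx -row_permE; apply/matrixP => x y.
by rewrite !mxE tperm_eq_swap.
Qed.

Lemma rdelta_mul_tperm_mx a b c p q :
  rdelta_mx c p q *m tperm_mx a b = rdelta_mx c p (tperm a b q).
Proof.
rewrite /tperm_mx; have := col_permE (tperm a b) (rdelta_mx c p q).
rewrite tpermV => <-; apply/matrixP => x y.
by rewrite !mxE tperm_eq_swap.
Qed.

Lemma tperm_mxK a b : tperm_mx a b *m tperm_mx a b = 1%:M :> 'M[R]_n.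
Proof. by rewrite /tperm_mx -perm_mxM tperm2 perm_mx1. Qed.

Lemma conj_tperm_mx_elem (i j k : 'I_n) c : i != j -> j != k -> i != k ->
  (tperm_mx j k *m tperm_mx i j) *m elem_mx i j c *m (tperm_mx i j *m tperm_mx j k)
  = elem_mx k i c.
Proof.
move=> hij hjk hik.
rewrite !elem_mxE mulmxDr mulmxDl mulmx1 -mulmxA (mulmxA (tperm_mx i j)).
rewrite tperm_mxK mul1mx tperm_mxK -(mulmxA (tperm_mx j k)).
rewrite !tperm_mx_mul_rdelta mulmxA !rdelta_mul_tperm_mx.
by rewrite tpermL tpermR tpermL tpermD // eq_sym.
Qed.

End ElementaryRelations.

Section AlternatingInElementary.
Variables (R : pzRingType) (n : nat).
Implicit Types (a b i : 'I_n) (c : R) (A B : 'M[R]_n).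
Local Notation inE := (@in_E R n).

Lemma in_E_elem p q c : p != q -> inE (elem_mx p q c).
Proof. by move=> h; apply: mx_genS; exists p, q, c. Qed.

Definition sign_mx a : 'M[R]_n :=
  \matrix_(x, y) if x == y then (if x == a then -1 else 1) else 0.

Lemma mulmx_sign A a :
  A *m sign_mx a = \matrix_(x, y) (A x y * (if y == a then -1 else 1)).
Proof.
apply/matrixP => x y; rewrite !mxE (bigD1 y) //= big1 ?addr0; last first.
  by move=> k /negbTE kq; rewrite mxE kq mulr0.
by rewrite mxE eqxx.
Qed.

Lemma sign_mulmx a A :
  sign_mx a *m A = \matrix_(x, y) ((if x == a then -1 else 1) * A x y).
Proof.
apply/matrixP => x y; rewrite !mxE (bigD1 x) //= big1 ?addr0; last first.
  by move=> k /negbTE kq; rewrite mxE eq_sym kq mul0r.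
by rewrite mxE eqxx.
Qed.

Lemma sign_mxK a : sign_mx a *m sign_mx a = 1%:M.
Proof.
rewrite sign_mulmx; apply/matrixP => x y; rewrite !mxE.
by case_indices; simpl_ring; rewrite ?mulrNN ?mulr1.
Qed.

Lemma conj_sign_elem a p q c : p != q ->
  sign_mx a *m elem_mx p q c *m sign_mx a =
  elem_mx p q (if (p == a) || (q == a) then - c else c).
Proof.
move=> hpq; rewrite mulmx_sign sign_mulmx !elem_mxE; apply/matrixP => x y.
rewrite /rdelta_mx !mxE; case_indices; simpl_ring;
  by rewrite ?mulrNN ?mulr1 ?mulN1r ?mulrN1 ?opprK.
Qed.

Lemma conj_sign_in_E a F : inE F -> inE (sign_mx a *m F *m sign_mx a).
Proof.
have conjM M N : sign_mx a *m (M *m N) *m sign_mx a =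
    (sign_mx a *m M *m sign_mx a) *m (sign_mx a *m N *m sign_mx a).
  by rewrite -!mulmxA (mulmxA (sign_mx a) (sign_mx a)) sign_mxK mul1mx.
elim=> [|M [p [q [c [hpq ->]]]]|M N _ IH1 _ IH2|M N _ IH h1 h2].
- by rewrite mulmx1 sign_mxK; apply: mx_gen1.
- by rewrite conj_sign_elem //; apply: in_E_elem.
- by rewrite conjM; apply: mx_genM.
- by apply: (mx_genV IH); rewrite -conjM ?h1 ?h2 mulmx1 sign_mxK.
Qed.

Definition weyl_mx a b : 'M[R]_n :=
  elem_mx a b 1 *m elem_mx b a (-1) *m elem_mx a b 1.

Lemma weyl_mx_in_E a b : a != b -> inE (weyl_mx a b).
Proof.
move=> h; apply: mx_genM; first apply: mx_genM.
all: by apply: in_E_elem; rewrite // eq_sym.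
Qed.

Lemma tperm_mx_weyl a b : a != b -> tperm_mx a b = weyl_mx a b *m sign_mx a.
Proof.
move=> h; have -> : weyl_mx a b = 1%:M + rdelta_mx 1 a b - rdelta_mx 1 b a
    - rdelta_mx 1 a a - rdelta_mx 1 b b.
  by rewrite /weyl_mx; expand_elem; rdelta_entrywise.
rewrite mulmx_sign; apply/matrixP => x y; rewrite tperm_mx_entry tperm_ifE.
by rewrite /rdelta_mx !mxE; case_indices; simpl_ring; rewrite ?mulrNN ?mulr1.
Qed.

Lemma conj_tperm_sign a b :
  tperm_mx a b *m sign_mx a *m tperm_mx a b = sign_mx b :> 'M[R]_n.
Proof.
rewrite /tperm_mx -row_permE.
have := col_permE (tperm a b) (row_perm (tperm a b) (sign_mx a)).
rewrite tpermV => <-; apply/matrixP => x y; rewrite !mxE.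
by rewrite (inj_eq perm_inj) tperm_eq_swap tpermL; case: (x == y).
Qed.

(* [sign_mx a *m sign_mx b] is the square of the Weyl element w_ba. *)
Lemma sign_mulmx_sign_in_E a b : inE (sign_mx a *m sign_mx b).
Proof.
have [<-|hab] := eqVneq a b; first by rewrite sign_mxK; apply: mx_gen1.
have hba : b != a by rewrite eq_sym.
have hW : weyl_mx b a = tperm_mx b a *m sign_mx b.
  by rewrite tperm_mx_weyl // -mulmxA sign_mxK mulmx1.
rewrite -(conj_tperm_sign b a) -hW -mulmxA -hW.
by apply: mx_genM; apply: weyl_mx_in_E.
Qed.

(* The product of the elementary matrices e_iy(-1), y in s. *)
Definition row_elim_mx i (s : seq 'I_n) : 'M[R]_n :=
  \matrix_(x, y) ((x == y)%:R - ((x == i) && (y \in s))%:R).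

Lemma row_elim_mx_in_E i s : uniq s -> i \notin s -> inE (row_elim_mx i s).
Proof.
elim: s => [|c s IH] /=.
  move=> _ _; have -> : row_elim_mx i [::] = 1%:M.
    by apply/matrixP=> x y; rewrite !mxE in_nil andbF subr0.
  exact: mx_gen1.
move=> /andP [cs us]; rewrite in_cons negb_or => /andP [ic iS].
have -> : row_elim_mx i (c :: s) = row_elim_mx i s *m elem_mx i c (-1).
  apply/matrixP => x y; rewrite elem_mxE mulmxDr mulmx1 [in RHS]mxE.
  rewrite mulmx_rdelta_entry !mxE in_cons.
  case_indices; simpl_ring; try (case: (y \in s); simpl_ring);
    by rewrite ?mulrN1 ?mulr1.
apply: mx_genM; [exact: IH | exact: in_E_elem].
Qed.

Lemma sigma_last_mxE i :
  @sigma_last_mx R n i = row_elim_mx i [seq y <- enum 'I_n | y != i] *m sign_mx i.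
Proof.
rewrite mulmx_sign; apply/matrixP => x y; rewrite !mxE mem_filter mem_enum andbT.
by case_indices; simpl_ring; rewrite ?mulrN1 ?mulr1 ?opprK.
Qed.

Lemma sigma_gen_sign g : sigma_gen g -> exists F a, inE F /\ g = F *m sign_mx a.
Proof.
case=> [[i [j [hij ->]]]|[i ->]].
  by exists (weyl_mx i j), i; split; [apply: weyl_mx_in_E | apply: tperm_mx_weyl].
exists (row_elim_mx i [seq y <- enum 'I_n | y != i]), i.
split; last exact: sigma_last_mxE.
apply: row_elim_mx_in_E; first by rewrite filter_uniq ?enum_uniq.
by rewrite mem_filter eqxx.
Qed.

Lemma sigma_gen_pair_in_E g1 g2 : sigma_gen g1 -> sigma_gen g2 -> inE (g1 *m g2).
Proof.
move=> /sigma_gen_sign [F1 [a [h1 ->]]] /sigma_gen_sign [F2 [b [h2 ->]]].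
have -> : F1 *m sign_mx a *m (F2 *m sign_mx b) =
    F1 *m (sign_mx a *m F2 *m sign_mx a) *m (sign_mx a *m sign_mx b).
  by rewrite -!mulmxA (mulmxA (sign_mx a) (sign_mx a)) sign_mxK mul1mx.
apply: mx_genM; last exact: sign_mulmx_sign_in_E.
by apply: mx_genM; [exact: h1 | exact: conj_sign_in_E].
Qed.

Lemma in_A_in_E X : in_A X -> inE X.
Proof.
case=> s [hs hodd ->].
have : size s = (size s)./2.*2 by rewrite -{1}(odd_double_half (size s)) (negbTE hodd).
move: (size s)./2 => k; elim: k s hs {hodd} => [|k IH] [|g1 [|g2 s]] //= hs.
- by move=> _; apply: mx_gen1.
- move=> [] hk; rewrite mulmxA; apply: mx_genM.
    by apply: sigma_gen_pair_in_E; apply: hs; rewrite !in_cons eqxx ?orbT.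
  by apply: IH => // Y hY; apply: hs; rewrite !in_cons hY !orbT.
Qed.

Lemma in_E_inv X : inE X -> exists Y, mx_inv_pair X Y.
Proof.
elim=> [|M [p [q [c [hpq ->]]]]|M N _ [M' hM] _ [N' hN]|M N _ _ f1 f2].
- by exists 1%:M; split; apply: mulmx1.
- by exists (elem_mx p q (- c)); apply: mx_inv_pair_elem.
- by exists (N' *m M'); apply: mx_inv_pairM.
- by exists M.
Qed.

End AlternatingInElementary.

Section Unipotent.
Variables (R : pzRingType) (n : nat).
Implicit Types (b c : 'M[R]_n).

Definition upper_mx b : 'M[R]_(n + n) := block_mx 1%:M b 0 1%:M.
Definition lower_mx c : 'M[R]_(n + n) := block_mx 1%:M 0 c 1%:M.

Lemma upper_mxD b c : upper_mx b *m upper_mx c = upper_mx (b + c).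
Proof.
by rewrite /upper_mx mulmx_block !mulmx0 !mul0mx !mul1mx !mulmx1 !addr0 add0r addrC.
Qed.

Lemma lower_mxD b c : lower_mx b *m lower_mx c = lower_mx (b + c).
Proof. by rewrite /lower_mx mulmx_block !mulmx0 !mul0mx !mul1mx !mulmx1 !addr0 add0r. Qed.

Lemma upper_mx0 : upper_mx 0 = 1%:M.
Proof. by rewrite /upper_mx -scalar_mx_block. Qed.

Lemma lower_mx0 : lower_mx 0 = 1%:M.
Proof. by rewrite /lower_mx -scalar_mx_block. Qed.

Lemma mx_inv_pair_upper b : mx_inv_pair (upper_mx b) (upper_mx (- b)).
Proof. by split; rewrite upper_mxD ?subrr ?addNr upper_mx0. Qed.

Lemma mx_inv_pair_lower c : mx_inv_pair (lower_mx c) (lower_mx (- c)).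
Proof. by split; rewrite lower_mxD ?subrr ?addNr lower_mx0. Qed.

End Unipotent.

Section FormRing.
Variables (R : pzRingType) (star : R -> R) (eps epsi : R) (Lam : R -> Prop).
Hypothesis fr : is_form_ring star eps epsi Lam.
Local Notation sm := (star_mx star).
Local Notation hyp := (hyp_mx star).
Local Notation herm := (in_Lam_n star eps Lam).

Lemma starD x y : star (x + y) = star x + star y. Proof. exact: fr_starD fr x y. Qed.
Lemma starM x y : star (x * y) = star y * star x. Proof. exact: fr_starM fr x y. Qed.
Lemma star1 : star 1 = 1. Proof. exact: fr_star1 fr. Qed.
Lemma star0 : star 0 = 0.
Proof. by apply: (addrI (star 0)); rewrite -starD !addr0. Qed.
Lemma starN x : star (- x) = - star x.
Proof. by apply: (addrI (star x)); rewrite -starD !subrr star0. Qed.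
Lemma mul_eps_epsi : eps * epsi = 1. Proof. by case: (fr_epsK fr). Qed.
Lemma mul_epsi_eps : epsi * eps = 1. Proof. by case: (fr_epsK fr). Qed.
Lemma star_eps : star eps = epsi. Proof. exact: fr_star_eps fr. Qed.
Lemma starK x : star (star x) = eps * x * epsi.
Proof. by rewrite (fr_starK fr) star_eps. Qed.
Lemma star_epsi : star epsi = eps.
Proof. by rewrite -star_eps starK -mulrA mul_eps_epsi mulr1. Qed.

Lemma star_sum m (F : 'I_m -> R) : star (\sum_i F i) = \sum_i star (F i).
Proof. exact: (big_morph star starD star0). Qed.

Lemma star_mxM m k l (A : 'M[R]_(m, k)) (B : 'M[R]_(k, l)) :
  sm (A *m B) = sm B *m sm A.
Proof.
apply/matrixP => i j; rewrite !mxE star_sum; apply: eq_bigr => t _.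
by rewrite !mxE starM.
Qed.

Lemma star_mx1 n : sm (1%:M : 'M[R]_n) = 1%:M.
Proof.
apply/matrixP => i j; rewrite !mxE eq_sym.
by case: (i == j); rewrite ?mulr1n ?mulr0n ?star1 ?star0.
Qed.

Lemma star_mx0 m k : sm (0 : 'M[R]_(m, k)) = 0.
Proof. by apply/matrixP => i j; rewrite !mxE star0. Qed.

Lemma star_mxD m k (A B : 'M[R]_(m, k)) : sm (A + B) = sm A + sm B.
Proof. by apply/matrixP => i j; rewrite !mxE starD. Qed.

Lemma star_rdelta_mx n a (p q : 'I_n) : sm (rdelta_mx a p q) = rdelta_mx (star a) q p.
Proof. by apply/matrixP => i j; rewrite !mxE andbC; case: (_ && _); rewrite ?star0. Qed.

Lemma star_elem_mx n (p q : 'I_n) a : sm (elem_mx p q a) = 1%:M + rdelta_mx (star a) q p.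
Proof. by rewrite elem_mxE star_mxD star_mx1 star_rdelta_mx. Qed.

Section Hyperbolic.
Variable n : nat.
Implicit Types (X Y : 'M[R]_n).

Lemma hyp_mxM X Y X' Y' : hyp X Y *m hyp X' Y' = hyp (X *m X') (Y' *m Y).
Proof. by rewrite /hyp_mx mulmx_block !mulmx0 !mul0mx !addr0 add0r star_mxM. Qed.

Lemma hyp_mx1 : hyp 1%:M 1%:M = 1%:M :> 'M[R]_(n + n).
Proof. by rewrite /hyp_mx star_mx1 -scalar_mx_block. Qed.

Lemma mx_inv_pair_hyp X Y : mx_inv_pair X Y -> mx_inv_pair (hyp X Y) (hyp Y X).
Proof. by move=> [h1 h2]; split; rewrite hyp_mxM ?h1 ?h2 hyp_mx1. Qed.

Lemma conj_hyp_upper X Y b : X *m Y = 1%:M ->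
  hyp X Y *m upper_mx b *m hyp Y X = upper_mx (X *m b *m sm X).
Proof.
move=> h; rewrite /hyp_mx /upper_mx !mulmx_block !mulmx0 !mul0mx !mulmx1 !addr0 !add0r.
by rewrite ?mul0mx ?mulmx1 h -star_mxM h star_mx1.
Qed.

Lemma conj_hyp_lower X Y c : X *m Y = 1%:M ->
  hyp X Y *m lower_mx c *m hyp Y X = lower_mx (sm Y *m c *m Y).
Proof.
move=> h; rewrite /hyp_mx /lower_mx !mulmx_block !mulmx0 !mul0mx !mulmx1 !addr0 !add0r.
by rewrite ?mul0mx h -star_mxM h star_mx1.
Qed.

End Hyperbolic.

Lemma LamN x : Lam x -> Lam (- x).
Proof. by move=> h; rewrite -sub0r; apply: (fr_LamB fr); [apply: (fr_Lam0 fr)|]. Qed.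

Lemma Lam_star_eps x : Lam (star x) -> star x = - (eps * x).
Proof. by move=> h; rewrite {1}(fr_Lam_max fr h) starK -!mulrA mul_epsi_eps mulr1. Qed.

Lemma star_eps_sym b g : star g = - (eps * b) -> star b = - (eps * g).
Proof.
move=> h; have := congr1 star h; rewrite starK starN starM star_eps => h2.
have := congr1 (fun x => x * eps) h2.
rewrite /= -mulrA mul_epsi_eps mulr1 mulNr -mulrA mul_epsi_eps mulr1 => ->.
by rewrite opprK.
Qed.

Lemma star_eps_symr b g : b = - (star g * eps) -> g = - (star b * eps).
Proof.
move=> ->; rewrite starN starM starK star_eps mulNr opprK.
by rewrite -!mulrA mul_epsi_eps mulr1 mulrA mul_epsi_eps mul1r.
Qed.

Section LambdaMatrices.
Variable n : nat.
Implicit Types (p q : 'I_n) (b g : R).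

Lemma herm0 : herm (0 : 'M[R]_n).
Proof.
by split => [i j _|i]; rewrite !mxE ?star0 ?mul0r ?oppr0 //; apply: (fr_Lam0 fr).
Qed.

Lemma herm_star_pair p q b g : p != q -> star g = - (eps * b) ->
  herm (sm (rdelta_mx b p q + rdelta_mx g q p)).
Proof.
move=> hpq h; split => [x y hxy|x]; rewrite !mxE; case_indices;
  rewrite ?addr0 ?add0r ?star0 ?mulr0 ?mul0r ?oppr0 //; try exact: (fr_Lam0 fr).
all: rewrite starK -!mulrA mul_epsi_eps mulr1 //; exact: star_eps_sym.
Qed.

Lemma herm_star_diag p b : Lam (star b) -> herm (sm (rdelta_mx b p p)).
Proof.
move=> h; split => [x y hxy|x]; rewrite !mxE; case_indices;
  by rewrite ?star0 ?mul0r ?oppr0 //; apply: (fr_Lam0 fr).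
Qed.

Lemma herm_pair p q b g : p != q -> b = - (star g * eps) ->
  herm (rdelta_mx b p q + rdelta_mx g q p).
Proof.
move=> hpq h; split => [x y hxy|x]; rewrite !mxE; case_indices;
  rewrite ?addr0 ?add0r ?star0 ?mul0r ?oppr0 //; try exact: (fr_Lam0 fr).
exact: star_eps_symr.
Qed.

Lemma herm_diag p b : Lam b -> herm (rdelta_mx b p p).
Proof.
move=> h; split => [x y hxy|x]; rewrite !mxE; case_indices;
  by rewrite ?star0 ?mul0r ?oppr0 //; apply: (fr_Lam0 fr).
Qed.

Local Notation EU := (@in_EU R star eps Lam n).

Lemma in_EU_upper (b : 'M[R]_n) : herm (sm b) -> EU (upper_mx b).
Proof.
move=> h; apply: mx_genS; right; split; last by left; exists b.
rewrite /in_U /upper_mx block_mxKul block_mxKur block_mxKdl block_mxKdr; split.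
- by exists (upper_mx (- b)); exact: mx_inv_pair_upper.
- by rewrite star_mx1 mulmx1 star_mx0 mul0mx addr0.
- by rewrite mulmx0; exact: herm0.
- by rewrite mulmx1.
Qed.

Lemma in_EU_lower (c : 'M[R]_n) : herm c -> EU (lower_mx c).
Proof.
move=> h; apply: mx_genS; right; split; last by right; exists c.
rewrite /in_U /lower_mx block_mxKul block_mxKur block_mxKdl block_mxKdr; split.
- by exists (lower_mx (- c)); exact: mx_inv_pair_lower.
- by rewrite star_mx1 mulmx1 scaler0 mulmx0 addr0.
- by rewrite star_mx1 mul1mx.
- by rewrite star_mx0 mul0mx; exact: herm0.
Qed.

Lemma in_EU_hyp (X Y : 'M[R]_n) : in_E X -> mx_inv_pair X Y -> EU (hyp X Y).
Proof. by move=> hX [h1 h2]; apply: mx_genS; left; exists X, Y. Qed.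

End LambdaMatrices.

Section NormalClosure.
Variable n : nat.
Hypothesis n_ge3 : (3 <= n)%N.
Local Notation EU := (@in_EU R star eps Lam n).
Local Notation NC := (normal_closure_in EU (in_H_of star (@in_A R n))).
Implicit Types (M N : 'M[R]_(n + n)) (X Y : 'M[R]_n).

Lemma NC_conj M (g g' : 'M[R]_(n + n)) :
  NC M -> EU g -> mx_inv_pair g g' -> NC (g *m M *m g').
Proof.
move=> hM hg [e1 e2].
have conjM M1 M2 : g *m (M1 *m M2) *m g' = (g *m M1 *m g') *m (g *m M2 *m g').
  by rewrite !mulmxA -(mulmxA (g *m M1) g' g) e2 mulmx1.
elim: hM => [|M0 [a [a' [h [ha h1 h2 hh ->]]]]|M1 M2 _ IH1 _ IH2|M1 M2 _ IH f1 f2].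
- by rewrite mulmx1 e1; apply: mx_gen1.
- apply: mx_genS; exists (g *m a), (a' *m g'), h; split => //.
  + exact: mx_genM.
  + by rewrite !mulmxA -(mulmxA g a a') h1 mulmx1 e1.
  + by rewrite !mulmxA -(mulmxA a' g' g) e2 mulmx1 h2.
  + by rewrite !mulmxA.
- by rewrite conjM; apply: mx_genM.
- by apply: (mx_genV IH); rewrite -conjM ?f1 ?f2 mulmx1.
Qed.

Lemma NC_commutator M M' (g g' : 'M[R]_(n + n)) : NC M -> mx_inv_pair M M' -> EU g ->
  mx_inv_pair g g' -> NC (g *m M *m g' *m M').
Proof.
move=> hM hMM' hg hgg'; apply: mx_genM; first exact: NC_conj.
exact: mx_gen_inv hM hMM'.
Qed.

Lemma hyp_A_in_NC X Y : in_A X -> mx_inv_pair X Y -> NC (hyp X Y).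
Proof.
move=> hX [h1 h2]; apply: mx_genS; exists 1%:M, 1%:M, (hyp X Y); split.
- exact: mx_gen1.
- exact: mulmx1.
- exact: mulmx1.
- by exists X, Y.
- by rewrite mulmx1 mul1mx.
Qed.

Definition hyp_in_NC X := exists Y, mx_inv_pair X Y /\ NC (hyp X Y).

Lemma hyp_in_NC_inv X Y : hyp_in_NC X -> mx_inv_pair X Y -> NC (hyp X Y).
Proof. by move=> [Y0 [h0 hN]] h; rewrite -(mx_inv_pair_uniq h0 h). Qed.

Lemma hyp_in_NC_commutator X X' G G' : hyp_in_NC X -> mx_inv_pair X X' ->
  in_E G -> mx_inv_pair G G' -> hyp_in_NC (G *m X *m G' *m X').
Proof.
move=> hX hXX' hG hGG'.
exists (X *m (G *m (X' *m G'))); split.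
  apply: mx_inv_pairM; last exact: mx_inv_pair_sym.
  by apply: mx_inv_pairM; [apply: mx_inv_pairM | apply: mx_inv_pair_sym].
have := NC_commutator (hyp_in_NC_inv hX hXX') (mx_inv_pair_hyp hXX')
  (in_EU_hyp hG hGG') (mx_inv_pair_hyp hGG').
by rewrite !hyp_mxM.
Qed.

Lemma exists_third_index (p q : 'I_n) : exists i : 'I_n, i != p /\ i != q.
Proof.
pose o0 := Ordinal (leq_trans (isT : (0 < 3)%N) n_ge3).
pose o1 := Ordinal (leq_trans (isT : (1 < 3)%N) n_ge3).
pose o2 := Ordinal n_ge3.
have [<-|n0p] := eqVneq o0 p; have [<-|n0q] := eqVneq o0 q.
- by exists o1.
- have [<-|n1q] := eqVneq o1 q; first by exists o2.
  by exists o1.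
- have [<-|n1p] := eqVneq o1 p; first by exists o2.
  by exists o1.
- by exists o0.
Qed.

(* The permutation matrix of the 3-cycle (q p)(i q) lies in A_{n+1} and
   conjugates e_iq(r) to e_pi(r). *)
Lemma hyp_elem_in_NC p q r : p != q ->
  NC (hyp (elem_mx p q r) (elem_mx p q (- r))).
Proof.
move=> hpq; have [i [hip hiq]] := exists_third_index p q.
have hqp : q != p by rewrite eq_sym.
pose P : 'M[R]_n := tperm_mx q p *m tperm_mx i q.
pose P' : 'M[R]_n := tperm_mx i q *m tperm_mx q p.
have hP : mx_inv_pair P P' by apply: mx_inv_pairM; split; apply: tperm_mxK.
have hA : in_A P.
  exists [:: tperm_mx q p; tperm_mx i q]; split => //; last by rewrite /= mulmx1.
  by move=> Y; rewrite !inE => /orP [] /eqP ->; left; [exists q, p | exists i, q].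
have h0 : hyp_in_NC P by exists P'; split => //; exact: hyp_A_in_NC.
have h1 := hyp_in_NC_commutator h0 hP (in_E_elem r hiq) (mx_inv_pair_elem r hiq).
rewrite -(mulmxA _ P) -mulmxA (conj_tperm_mx_elem _ hiq hqp hip) in h1.
have hx : mx_inv_pair (elem_mx i q r *m elem_mx p i (- r))
                      (elem_mx p i r *m elem_mx i q (- r)).
  apply: mx_inv_pairM; first exact: mx_inv_pair_elem.
  by rewrite -{2}(opprK r); apply: mx_inv_pair_elem; rewrite eq_sym.
have := hyp_in_NC_commutator h1 hx (in_E_elem 1 hiq) (mx_inv_pair_elem 1 hiq).
rewrite commutator_elem_mx // => h2.
exact: hyp_in_NC_inv h2 (mx_inv_pair_elem r hpq).
Qed.

Lemma hyp_E_in_NC X : in_E X -> forall Y, mx_inv_pair X Y -> NC (hyp X Y).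
Proof.
elim=> [|M [p [q [c [hpq ->]]]]|M N hM IH1 hN IH2|M N hM IH f1 f2] Y hY.
- have h11 : mx_inv_pair (1%:M : 'M[R]_n) 1%:M by split; apply: mulmx1.
  by rewrite -(mx_inv_pair_uniq h11 hY) hyp_mx1; apply: mx_gen1.
- rewrite -(mx_inv_pair_uniq (mx_inv_pair_elem c hpq) hY).
  exact: hyp_elem_in_NC.
- have [M' hM'] := in_E_inv hM; have [N' hN'] := in_E_inv hN.
  rewrite -(mx_inv_pair_uniq (mx_inv_pairM hM' hN') hY) -hyp_mxM.
  by apply: mx_genM; [apply: IH1 | apply: IH2].
- have hMN : mx_inv_pair M N by [].
  rewrite -(mx_inv_pair_uniq (mx_inv_pair_sym hMN) hY).
  exact: (mx_gen_inv (IH N hMN) (mx_inv_pair_hyp hMN)).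
Qed.

(* [[1,b],[0,1]] with b supported on (p,q), (q,p) is the commutator of
   H(e_pj(b eps)) with a unipotent generator supported on (j,q), (q,j). *)
Lemma upper_pair_in_NC (p q : 'I_n) b g : p != q -> star g = - (eps * b) ->
  NC (upper_mx (rdelta_mx b p q + rdelta_mx g q p)).
Proof.
move=> hpq h; have [j [hjp hjq]] := exists_third_index p q.
have hpj : p != j by rewrite eq_sym.
pose b0 := rdelta_mx (- epsi) j q + rdelta_mx 1 q j.
have hb0 : herm (sm b0).
  by apply: herm_star_pair => //; rewrite star1 mulrN opprK mul_eps_epsi.
pose r := b * eps.
have [hr _] := mx_inv_pair_elem r hpj.
have := NC_commutator (hyp_elem_in_NC r hpj) (mx_inv_pair_hyp (mx_inv_pair_elem r hpj))
  (in_EU_upper hb0) (mx_inv_pair_upper b0).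
rewrite -(mulmxA (upper_mx b0)) -mulmxA conj_hyp_upper // upper_mxD star_elem_mx.
congr (NC (upper_mx _)); rewrite /b0; expand_elem.
have -> : r * - epsi = - b by rewrite mulrN /r -mulrA mul_eps_epsi mulr1.
have -> : 1 * star r = - g.
  by rewrite mul1r /r starM star_eps (star_eps_sym h) mulrN mulrA mul_epsi_eps mul1r.
by rdelta_entrywise.
Qed.

Lemma upper_diag_in_NC (p : 'I_n) b : Lam (star b) -> NC (upper_mx (rdelta_mx b p p)).
Proof.
move=> h; have [j [hjp _]] := exists_third_index p p.
have hpj : p != j by rewrite eq_sym.
pose b0 := rdelta_mx (- b) j j.
have hb0 : herm (sm b0) by apply: herm_star_diag; rewrite starN; apply: LamN.
have [h1 _] := mx_inv_pair_elem (1 : R) hpj.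
have := NC_commutator (hyp_elem_in_NC 1 hpj) (mx_inv_pair_hyp (mx_inv_pair_elem 1 hpj))
  (in_EU_upper hb0) (mx_inv_pair_upper b0).
rewrite -(mulmxA (upper_mx b0)) -mulmxA conj_hyp_upper // upper_mxD star_elem_mx.
have -> : b0 + elem_mx p j 1 *m - b0 *m (1%:M + rdelta_mx (star 1) j p) =
    (rdelta_mx b p j + rdelta_mx b j p) + rdelta_mx b p p.
  by rewrite /b0 star1; expand_elem; rdelta_entrywise.
move=> hC.
have hS : NC (upper_mx (- (rdelta_mx b p j + rdelta_mx b j p))).
  rewrite opprD -!rdelta_mxN; apply: upper_pair_in_NC => //.
  by rewrite starN (Lam_star_eps h) mulrN.
by have := mx_genM hS hC; rewrite upper_mxD addrA addNr add0r.
Qed.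

Lemma lower_pair_in_NC (p q : 'I_n) b g : p != q -> b = - (star g * eps) ->
  NC (lower_mx (rdelta_mx b p q + rdelta_mx g q p)).
Proof.
move=> hpq h; have [i [hip hiq]] := exists_third_index p q.
pose c0 := rdelta_mx 1 i q + rdelta_mx (- eps) q i.
have hc0 : herm c0.
  by apply: herm_pair => //; rewrite starN star_eps mulNr mul_epsi_eps opprK.
pose r := - (epsi * g).
have [hr _] := mx_inv_pair_elem r hip.
have := NC_commutator (hyp_elem_in_NC r hip) (mx_inv_pair_hyp (mx_inv_pair_elem r hip))
  (in_EU_lower hc0) (mx_inv_pair_lower c0).
rewrite -(mulmxA (lower_mx c0)) -mulmxA conj_hyp_lower // lower_mxD star_elem_mx.
congr (NC (lower_mx _)); rewrite /c0; expand_elem.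
have -> : star (- r) * 1 = - b by rewrite mulr1 /r opprK starM star_epsi h opprK.
have -> : - eps * - r = - g by rewrite mulrNN /r mulrN mulrA mul_eps_epsi mul1r.
by rdelta_entrywise.
Qed.

Lemma lower_diag_in_NC (p : 'I_n) b : Lam b -> NC (lower_mx (rdelta_mx b p p)).
Proof.
move=> h; have [j [hjp _]] := exists_third_index p p.
pose c0 := rdelta_mx (- b) j j.
have hc0 : herm c0 by apply: herm_diag; apply: LamN.
have [h1 _] := mx_inv_pair_elem (1 : R) hjp.
have := NC_commutator (hyp_elem_in_NC 1 hjp) (mx_inv_pair_hyp (mx_inv_pair_elem 1 hjp))
  (in_EU_lower hc0) (mx_inv_pair_lower c0).
rewrite -(mulmxA (lower_mx c0)) -mulmxA conj_hyp_lower // lower_mxD star_elem_mx.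
have -> : c0 + (1%:M + rdelta_mx (star (- 1)) p j) *m - c0 *m elem_mx j p (- 1) =
    (rdelta_mx (- b) p j + rdelta_mx (- b) j p) + rdelta_mx b p p.
  by rewrite /c0 starN star1; expand_elem; rdelta_entrywise.
move=> hC.
have hS : NC (lower_mx (- (rdelta_mx (- b) p j + rdelta_mx (- b) j p))).
  rewrite opprD -!rdelta_mxN opprK; apply: lower_pair_in_NC; first by rewrite eq_sym.
  by rewrite -{1}(fr_Lam_max fr h).
by have := mx_genM hS hC; rewrite lower_mxD addrA addNr add0r.
Qed.

Lemma NC_big_morph (F : 'M[R]_n -> 'M[R]_(n + n)) (f : 'I_n -> 'M[R]_n) :
  F 0 = 1%:M -> (forall a c, F (a + c) = F a *m F c) ->
  (forall i, NC (F (f i))) -> NC (F (\sum_i f i)).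
Proof.
move=> h0 hD hi; apply: (big_ind (fun A => NC (F A))) => [|x y hx hy|i _].
- by rewrite h0; apply: mx_gen1.
- by rewrite hD; apply: mx_genM.
- exact: hi.
Qed.

Lemma upper_in_NC (b : 'M[R]_n) : herm (sm b) -> NC (upper_mx b).
Proof.
move=> [hb_off hb_diag]; rewrite (matrix_sum_pair_part b).
apply: NC_big_morph => [|a c|p]; rewrite ?upper_mx0 ?upper_mxD //.
apply: NC_big_morph => [|a c|q]; rewrite ?upper_mx0 ?upper_mxD //.
rewrite /pair_part; case: ifP => [hlt|_].
  have hpq : p != q by rewrite neq_ltn hlt.
  apply: upper_pair_in_NC => //.
  by have := hb_off p q hpq; rewrite !mxE starK -!mulrA mul_epsi_eps mulr1.
have [->|hpq] := eqVneq p q; last by rewrite upper_mx0; apply: mx_gen1.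
by apply: upper_diag_in_NC; have := hb_diag q; rewrite mxE.
Qed.

Lemma lower_in_NC (c : 'M[R]_n) : herm c -> NC (lower_mx c).
Proof.
move=> [hc_off hc_diag]; rewrite (matrix_sum_pair_part c).
apply: NC_big_morph => [|a d|p]; rewrite ?lower_mx0 ?lower_mxD //.
apply: NC_big_morph => [|a d|q]; rewrite ?lower_mx0 ?lower_mxD //.
rewrite /pair_part; case: ifP => [hlt|_].
  have hpq : p != q by rewrite neq_ltn hlt.
  by apply: lower_pair_in_NC => //; apply: hc_off.
have [->|hpq] := eqVneq p q; last by rewrite lower_mx0; apply: mx_gen1.
exact: lower_diag_in_NC.
Qed.

Lemma in_EU_in_NC M : EU M -> NC M.
Proof.
elim=> [|M0 [[X [Y [hX h1 h2 ->]]] | [hU [[b e]|[c e]]]]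
       |M1 M2 _ IH1 _ IH2|M1 M2 _ IH f1 f2].
- exact: mx_gen1.
- exact: hyp_E_in_NC.
- subst M0; apply: upper_in_NC.
  move: hU; rewrite /in_U /upper_mx block_mxKur block_mxKdr => -[_ _ _].
  by rewrite mulmx1.
- subst M0; apply: lower_in_NC.
  move: hU; rewrite /in_U /lower_mx block_mxKul block_mxKdl => -[_ _].
  by rewrite star_mx1 mul1mx.
- exact: mx_genM.
- exact: mx_genV IH f1 f2.
Qed.

Lemma NC_in_EU M : NC M -> EU M.
Proof.
elim=> [|M0 [g [g' [h [hg h1 h2 [X [Y [hX e1 e2 ->]]] ->]]]]
       |M1 M2 _ IH1 _ IH2|M1 M2 _ IH f1 f2].
- exact: mx_gen1.
- apply: mx_genM; last exact: mx_genV hg h1 h2.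
  by apply: mx_genM => //; apply: in_EU_hyp; [exact: in_A_in_E | split].
- exact: mx_genM.
- exact: mx_genV IH f1 f2.
Qed.

End NormalClosure.

End FormRing.

Unset Implicit Arguments.
Theorem lemma5p3 (R : pzRingType) (star : R -> R) (eps epsi : R)
    (Lam : R -> Prop) (n : nat) :
  is_form_ring star eps epsi Lam -> (3 <= n)%N ->
  forall M : 'M[R]_(n + n),
    in_EU star eps Lam M <->
    normal_closure_in (@in_EU R star eps Lam n) (in_H_of star (@in_A R n)) M.
Proof.
move=> fr n_ge3 M; split; [exact: (in_EU_in_NC fr n_ge3) | exact: NC_in_EU].
Qed.
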